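(* Let $X=\{0,1\}$ and $c\geq1$. Let $\widetilde K_{1,01}(c)$ be the set of all $w\in X^c$ such that the sequence $(1,01,w)$ is not a code, and let $J_{1,01}(c)$ be the set of all words in $X^c$ that do not contain two consecutive $0$'s (i.e. do not contain $00$ as a factor). Then $\widetilde K_{1,01}(c)=J_{1,01}(c)$, and $|\widetilde K_{1,01}(c)|=F_{c+2}$, where $F_k$ is the $k$-th Fibonacci number ($F_0=0$, $F_1=1$, $F_k=F_{k-1}+F_{k-2}$).
   Context: A code over $X$ is a finite sequence $C=(v_1,\ldots,v_m)$ of words over $X$ such that every $w\in X^*$ has at most one factorization into code-words: if $w=v_{i_1}\cdots v_{i_l}=v_{j_1}\cdots v_{j_{l'}}$ with $l,l'\geq1$, then $l=l'$ and $i_t=j_t$ for all $t$. *)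

From mathcomp Require Import all_boot.
Set Implicit Arguments. Unset Strict Implicit. Unset Printing Implicit Defensive.

(* Alphabet X = {0,1} is encoded as bool: letter 0 = false, letter 1 = true.
   Words over X are seq bool. *)
Definition word := seq bool.

(* A factorization is given by a
   non-empty sequence of indices (0-based, each < size C). *)
Definition concat_idx (C : seq word) (s : seq nat) : word :=
  flatten [seq nth [::] C i | i <- s].

Definition is_code (C : seq word) : Prop :=
  forall s t : seq nat,
    s != [::] -> t != [::] ->
    all (fun i => i < size C) s -> all (fun i => i < size C) t ->
    concat_idx C s = concat_idx C t -> s = t.

Definition J101 (c : nat) : {set c.-tuple bool} :=
  [set w : c.-tuple bool | ~~ infix [:: false; false] (val w)].

Fixpoint fib (n : nat) : nat :=
  match n with
  | 0 => 0
  | 1 => 1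
  | (m.+1 as k).+1 => fib k + fib m
  end.

From mathcomp Require Import all_boot.
From mathcomp Require Import zify.

Set Implicit Arguments. Unset Strict Implicit. Unset Printing Implicit Defensive.

(* - If w has no factor 00, then w.1 splits into blocks 1 and 01, so w.1 has
     two different factorizations over C.
   - If w contains 00, let m be the length of the shortest prefix of w
     containing 00.  Every concatenation of code-words has its first 00
     ending at position >= m, and strictly beyond m when it starts with 1 or
     01.  Hence two factorizations cannot start with w and with 1 or 01;
     since 1 and 01 start with different letters, two factorizations of the
     same word have the same first index, and induction shows C is a code.
   - The words of length n without 00 are listed by [no00_words n]: either
     1.x with |x| = n-1, or 01.x with |x| = n-2.  This list is duplicate-free
     and has Fibonacci length, which gives the cardinality. *)

Fixpoint has00 (s : word) : bool :=
  match s with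
  | a :: ((b :: _) as t) => (~~ a && ~~ b) || has00 t
  | _ => false
  end.

Lemma infix00E (s : word) : infix [:: false; false] s = has00 s.
Proof.
elim: s => [|a t IH] //=; rewrite IH.
case: t {IH} => [|b t]; first by case: a.
by case: a; case: b => //=; rewrite ?prefix0s.
Qed.

Lemma has00_1 (z : word) : has00 (true :: z) = has00 z.
Proof. by case: z. Qed.

Lemma has00_01 (z : word) : has00 (false :: true :: z) = has00 z.
Proof. by case: z. Qed.

Lemma has00_take_1 n (y : word) :
  has00 (take n ([:: true] ++ y)) -> has00 (take n.-1 y).
Proof. by case: n => [|n] //; rewrite [take _ _]/= has00_1. Qed.

Lemma has00_take_01 n (y : word) :
  has00 (take n ([:: false; true] ++ y)) -> has00 (take n.-2 y).
Proof. by case: n => [|[|n]] //; rewrite [take _ _]/= has00_01. Qed.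

Lemma concat_idx_cons (C : seq word) i t :
  concat_idx C (i :: t) = nth [::] C i ++ concat_idx C t.
Proof. by []. Qed.

Section CodeOneZeroOne.

Variable w : word.
Local Notation C := [:: [:: true]; [:: false; true]; w].

Lemma no00_factorization (x : word) : ~~ has00 x ->
  exists2 t, all (fun i => i < 2) t & concat_idx C t = x ++ [:: true].
Proof.
have [n] := ubnP (size x); elim: n x => // n IH [|[] x] Hsize Hx.
- by exists [:: 0].
- rewrite has00_1 in Hx; have [t Ht Et] := IH x Hsize Hx.
  by exists (0 :: t); rewrite /= ?Ht // concat_idx_cons Et.
- case: x Hsize Hx => [|[] x] Hsize Hx; first by exists [:: 1].
    rewrite has00_01 in Hx; have [t Ht Et] := IH x (ltnW Hsize) Hx.
    by exists (1 :: t); rewrite /= ?Ht // concat_idx_cons Et.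
  by [].
Qed.

(* If w has no factor 00, then (w)(1) and the block factorization of w.1 are
   two distinct factorizations: the latter never uses the index of w. *)
Lemma not_code_of_no00 : ~~ has00 w -> ~ is_code C.
Proof.
move=> /no00_factorization [t Ht Et] Hcode.
have Hne : t != [::] by case: t Ht Et => // _; case: w.
have Ht3 : all (fun i => i < size C) t.
  by apply: sub_all Ht => i /= /ltn_trans; apply.
have E := Hcode [:: 2; 0] t erefl Hne erefl Ht3 (esym Et).
by move: Ht; rewrite -E.
Qed.

Section FirstOccurrence.

Variable m : nat.
Hypothesis m_min : forall n, has00 (take n w) -> m <= n.
Hypothesis m_le_size : m <= size w.

Lemma concat_first00 t : all (fun i => i < 3) t ->
  forall n, has00 (take n (concat_idx C t)) -> m <= n.
Proof.
elim: t => [|i t IH] /=; first by move=> _ [].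
move=> /andP [Hi Ht] n; rewrite concat_idx_cons.
case: i Hi => [|[|[|i]]] // _ /=.
- by move/has00_take_1/(IH Ht); lia.
- by move/has00_take_01/(IH Ht); lia.
- rewrite take_cat; case: ltnP => [_ /m_min //|]; lia.
Qed.

(* A concatenation starting with 1 or 01 has its first 00 strictly after
   position m, so it cannot agree with one starting with w when
   take m w contains 00. *)
Lemma no_overlap_w j u t : has00 (take m w) -> j < 2 ->
  all (fun i => i < 3) t -> w ++ u <> nth [::] C j ++ concat_idx C t.
Proof.
move=> Hm Hj Ht E.
have : has00 (take m (nth [::] C j ++ concat_idx C t)).
  by rewrite -E takel_cat.
have m_pos : 0 < m by case: (m) Hm; rewrite ?take0.
case: j Hj {E} => [|[|j]] // _ /=.
- by move/has00_take_1/(concat_first00 Ht); lia.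
- by move/has00_take_01/(concat_first00 Ht); lia.
Qed.

End FirstOccurrence.

(* Every code-word is non-empty when w is, so only the empty index sequence
   yields the empty word. *)
Lemma concat_idx_nil t : w != [::] -> all (fun i => i < 3) t ->
  concat_idx C t = [::] -> t = [::].
Proof.
move=> Hw; case: t => [|i t] //= /andP [Hi _]; rewrite concat_idx_cons.
by case: i Hi => [|[|[|i]]] //= _; move: Hw; case: w.
Qed.

(* If w contains 00, then C is a code: the first indices of two
   factorizations must coincide, and then cancel. *)
Lemma code_of_has00 : has00 w -> is_code C.
Proof.
move=> Hw; have ex00 : exists n, has00 (take n w).
  by exists (size w); rewrite take_size.
case: (ex_minnP ex00) => m Hm m_min.
have m_le : m <= size w by apply: m_min; rewrite take_size.
have Hw0 : w != [::] by case: (w) Hw.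
have cross := no_overlap_w m_min m_le Hm.
move=> s t _ _ /=; elim: s t => [|i s IH] [|j t] // Hs Ht.
- by move=> /esym /(concat_idx_nil Hw0 Ht).
- by move=> /(concat_idx_nil Hw0 Hs).
move: Hs Ht => /andP [Hi Hs] /andP [Hj Ht]; rewrite !concat_idx_cons.
case: (eqVneq i j) => [<- /eqP | Hij E].
  by rewrite eqseq_cat // eqxx => /eqP /(IH t Hs Ht) ->.
exfalso; case: i Hi Hij E => [|[|[|i]]] // _; case: j Hj => [|[|[|j]]] //= _ _.
- by move/esym/(cross 0 _ _ erefl Hs).
- by move/esym/(cross 1 _ _ erefl Hs).
- by move/(cross 0 _ _ erefl Ht).
- by move/(cross 1 _ _ erefl Ht).
Qed.

End CodeOneZeroOne.

Fixpoint no00_words (n : nat) : seq word :=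
  match n with
  | 0 => [:: [::]]
  | 1 => [:: [:: true]; [:: false]]
  | (k.+1 as n1).+1 =>
      [seq true :: x | x <- no00_words n1] ++ [seq false :: true :: x | x <- no00_words k]
  end.

Lemma no00_wordsSS n : no00_words n.+2 =
  [seq true :: x | x <- no00_words n.+1] ++ [seq false :: true :: x | x <- no00_words n].
Proof. by []. Qed.

Lemma mem_no00_words n x : (x \in no00_words n) = (size x == n) && ~~ has00 x.
Proof.
elim/ltn_ind: n x => -[|[|n]] IH x.
- by rewrite inE; case: x.
- by rewrite !inE; case: x => [|[] [|[] x]].
have inj1 : injective (cons true) by move=> ? ? [].
have inj01 : injective (fun y : word => false :: true :: y) by move=> ? ? [].
rewrite no00_wordsSS mem_cat.
case: x => [|[] x].
- by apply/negbTE; rewrite negb_or; apply/andP; split; apply/mapP => -[].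
- rewrite (mem_map inj1) has00_1 IH //.
  suff -> : (true :: x \in [seq false :: true :: y | y <- no00_words n]) = false.
    by rewrite orbF.
  by apply/negbTE/mapP => -[].
- have -> : (false :: x \in [seq true :: y | y <- no00_words n.+1]) = false.
    by apply/negbTE/mapP => -[].
  case: x => [|[] x]; first by apply/negbTE/mapP => -[].
    by rewrite (mem_map inj01) has00_01 IH.
  by rewrite andbC; apply/negbTE/mapP => -[].
Qed.

Lemma no00_words_uniq n : uniq (no00_words n).
Proof.
elim/ltn_ind: n => -[|[|n]] IH //.
rewrite no00_wordsSS cat_uniq !map_inj_uniq ?IH //; try by move=> ? ? [].
by rewrite andbT; apply/hasPn => _ /mapP [y _ ->]; apply/mapP => -[].
Qed.

Lemma size_no00_words n : size (no00_words n) = fib n.+2.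
Proof.
elim/ltn_ind: n => -[|[|n]] IH //.
by rewrite no00_wordsSS size_cat !size_map !IH // addnC.
Qed.

Lemma card_J101 c : #|J101 c| = fib c.+2.
Proof.
rewrite -size_no00_words cardE -(size_map val); apply/esym/perm_size.
apply: uniq_perm (no00_words_uniq c) _ _.
  by rewrite (map_inj_uniq val_inj) enum_uniq.
move=> x; rewrite mem_no00_words; apply/andP/mapP.
  case=> /eqP Hs Hx; exists (Tuple (introT eqP Hs)) => //.
  by rewrite mem_enum inE infix00E.
by move=> [y]; rewrite mem_enum inE infix00E => Hy ->; rewrite size_tuple.
Qed.

Theorem proposition4 (c : nat) (K : {set c.-tuple bool}) :
  1 <= c ->
  (forall w : c.-tuple bool,
      w \in K <-> ~ is_code [:: [:: true]; [:: false; true]; val w]) ->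
  K = J101 c /\ #|K| = fib c.+2.
Proof.
move=> _ HK.
have EK : K = J101 c.
  apply/setP => w; rewrite inE infix00E; apply/idP/idP.
    by move/HK => Hnc; apply/negP => /code_of_has00.
  by move/not_code_of_no00/HK.
by rewrite EK card_J101.
Qed.
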